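(* The uniform chirotopes are exactly the pre-CC-systems.
   Context: Let $E$ be a finite ground set whose elements are called points. Consider a boolean function on all ordered triples of distinct points of $E$; write $pqr$ to mean that the value associated with $(p,q,r)$ is true. The following axioms are understood with quantification over all pairwise distinct points: Axiom 1 (cyclic symmetry): $pqr \Longrightarrow qrp$. Axiom 2 (antisymmetry): $pqr \Longrightarrow \neg\, prq$. Axiom 3 (nondegeneracy): $pqr \vee prq$. Axiom 5 (transitivity): $tsp \wedge tsq \wedge tsr \wedge tpq \wedge tqr \Longrightarrow tpr$. (Given Axioms 1–3, Axiom 5 is equivalent to Axiom 5' (dual transitivity): $tps \wedge tqs \wedge trs \wedge tpq \wedge tqr \Longrightarrow tpr$.) A pre-CC-system is such a boolean function satisfying Axioms 1, 2, 3 and 5. A uniform chirotope is such a boolean function satisfying Axioms 1, 2, 3 and the Grassmann–Plücker relations: for all pairwise distinct points $t,p,q,r,s$, the set $\{(tpq \wedge trs) \vee (tqp \wedge tsr);\ (trp \wedge tqs) \vee (tpr \wedge tsq);\ (tps \wedge tqr) \vee (tsp \wedge trq)\}$ contains both the value true and the value false. *)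

From mathcomp Require Import all_boot.
Set Implicit Arguments. Unset Strict Implicit. Unset Printing Implicit Defensive.

(* Only its values on triples of pairwise distinct points matter: every axiom
   below is quantified over pairwise distinct points only. *)
Definition triple_fun (E : finType) := E -> E -> E -> bool.

Section TripleProps.
Variables (E : finType) (f : triple_fun E).

Definition distinct3 (p q r : E) := [/\ p != q, p != r & q != r].

Definition cyclic_symmetry := forall p q r : E, distinct3 p q r -> f p q r -> f q r p.
Definition antisymmetry := forall p q r : E, distinct3 p q r -> f p q r -> ~~ f p r q.
Definition nondegeneracy := forall p q r : E, distinct3 p q r -> f p q r || f p r q.

Definition distinct5 (t p q r s : E) := uniq [:: t; p; q; r; s].

Definition transitivity := forall t s p q r : E, distinct5 t s p q r ->
  f t s p -> f t s q -> f t s r -> f t p q -> f t q r -> f t p r.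

Definition pre_CC_system := [/\ cyclic_symmetry, antisymmetry, nondegeneracy & transitivity].

Definition has_true_and_false (a b c : bool) :=
  (true \in [:: a; b; c]) && (false \in [:: a; b; c]).

Definition grassmann_pluecker := forall t p q r s : E, distinct5 t p q r s ->
  has_true_and_false
    ((f t p q && f t r s) || (f t q p && f t s r))
    ((f t r p && f t q s) || (f t p r && f t s q))
    ((f t p s && f t q r) || (f t s p && f t r q)).

Definition uniform_chirotope := [/\ cyclic_symmetry, antisymmetry, nondegeneracy & grassmann_pluecker].
End TripleProps.

From mathcomp Require Import all_boot zify.
Set Implicit Arguments. Unset Strict Implicit. Unset Printing Implicit Defensive.

(* For a fixed point t, (x, y) |-> f t x y is a tournament on the other points
   (Axioms 2 and 3), and both the Grassmann-Pluecker relations with apex t and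
   Axioms 5, 5' with centre t only concern this tournament on four points.  A
   four-vertex tournament violates the relation exactly when one vertex
   dominates, or is dominated by, a 3-cycle on the other three, which is what
   Axioms 5 and 5' forbid.  So the relations amount to Axioms 5 and 5'
   together, and Axiom 5' follows from Axioms 1, 2, 3 and 5 by combining eight
   instances of Axiom 5 with different centres on the same five points. *)

Lemma implies5P (a b c d e h : bool) :
  reflect (a -> b -> c -> d -> e -> h) ([&& a, b, c, d & e] ==> h).
Proof.
apply: (iffP implyP) => H.
  by move=> *; apply: H; apply/and5P.
by case/and5P; apply: H.
Qed.

Section Tournament.
Variables (T : eqType) (D : pred T) (g : rel T).
Hypothesis g_flip : {in D &, forall x y, x != y -> g y x = ~~ g x y}.

Definition trans_at (s p q r : T) := [&& g s p, g s q, g s r, g p q & g q r] ==> g p r.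
Definition cotrans_at (s p q r : T) := [&& g p s, g q s, g r s, g p q & g q r] ==> g p r.
Definition gp_at (p q r s : T) :=
  has_true_and_false
    ((g p q && g r s) || (g q p && g s r))
    ((g r p && g q s) || (g p r && g s q))
    ((g p s && g q r) || (g s p && g r q)).

Definition locally_transitive := forall s p q r,
  all D [:: s; p; q; r] -> uniq [:: s; p; q; r] -> trans_at s p q r && cotrans_at s p q r.
Definition grassmann_pluecker_in := forall p q r s,
  all D [:: p; q; r; s] -> uniq [:: p; q; r; s] -> gp_at p q r s.

Lemma gp_at_trans_cotrans s p q r :
  all D [:: s; p; q; r] -> uniq [:: s; p; q; r] ->
  gp_at s p q r -> trans_at s p q r && cotrans_at s p q r.
Proof.
move=> /and5P[Ds Dp Dq Dr _]; rewrite /= !inE !negb_or.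
move=> /and4P[/and3P[sp sq sr] /andP[pq pr] qr _].
rewrite /gp_at /trans_at /cotrans_at /has_true_and_false.
rewrite (g_flip Ds Dp sp) (g_flip Ds Dq sq) (g_flip Ds Dr sr).
rewrite (g_flip Dp Dq pq) (g_flip Dp Dr pr) (g_flip Dq Dr qr).
by case: (g s p); case: (g s q); case: (g s r); case: (g p q); case: (g p r); case: (g q r).
Qed.

Lemma locally_transitive_gp : locally_transitive -> grassmann_pluecker_in.
Proof.
move=> loc a b c d Dabcd Uabcd.
have cone s p q r : perm_eq [:: s; p; q; r] [:: a; b; c; d] ->
    trans_at s p q r && cotrans_at s p q r.
  by move=> e; apply: loc; rewrite ?(perm_all _ e) ?(perm_uniq e).
(* One cone over a 3-cycle for each apex and each orientation of the cycle. *)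
have := cone a b c d (perm_refl _).
have := cone a b d c ltac:(by apply/permP => x /=; lia).
have := cone b a c d ltac:(by apply/permP => x /=; lia).
have := cone b a d c ltac:(by apply/permP => x /=; lia).
have := cone c a b d ltac:(by apply/permP => x /=; lia).
have := cone c a d b ltac:(by apply/permP => x /=; lia).
have := cone d a b c ltac:(by apply/permP => x /=; lia).
have := cone d a c b ltac:(by apply/permP => x /=; lia).
move: Dabcd Uabcd => /and5P[Da Db Dc Dd _]; rewrite /= !inE !negb_or.
move=> /and4P[/and3P[ab ac ad] /andP[bc bd] cd _].
rewrite /gp_at /trans_at /cotrans_at /has_true_and_false.
rewrite (g_flip Da Db ab) (g_flip Da Dc ac) (g_flip Da Dd ad).
rewrite (g_flip Db Dc bc) (g_flip Db Dd bd) (g_flip Dc Dd cd).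
by case: (g a b); case: (g a c); case: (g a d); case: (g b c); case: (g b d); case: (g c d).
Qed.

Lemma locally_transitiveP : locally_transitive <-> grassmann_pluecker_in.
Proof.
split; first exact: locally_transitive_gp.
by move=> gp s p q r Ds Us; apply: gp_at_trans_cotrans (gp _ _ _ _ Ds Us).
Qed.

End Tournament.

Section Chirotope.
Variables (E : finType) (f : triple_fun E).

Definition dual_transitivity := forall t s p q r : E,
  distinct5 t s p q r -> cotrans_at (f t) s p q r.

Lemma distinct5E (t a b c d : E) :
  distinct5 t a b c d = all (predC1 t) [:: a; b; c; d] && uniq [:: a; b; c; d].
Proof. by rewrite /distinct5 cons_uniq all_predC has_pred1. Qed.

Lemma transitivityE :
  transitivity f <-> forall t s p q r, distinct5 t s p q r -> trans_at (f t) s p q r.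
Proof.
by split=> tr t s p q r D; [apply/implies5P; apply: tr | apply/implies5P; apply: tr].
Qed.

Lemma transitivity_local :
  transitivity f /\ dual_transitivity <-> forall t, locally_transitive (predC1 t) (f t).
Proof.
split=> [[/transitivityE tr dtr] t s p q r Ds Us | loc].
  have D : distinct5 t s p q r by rewrite distinct5E Ds Us.
  by rewrite tr ?dtr.
split; [apply/transitivityE|] => t s p q r; rewrite distinct5E => /andP[Ds Us];
  by case/andP: (loc t s p q r Ds Us).
Qed.

Lemma grassmann_pluecker_local :
  grassmann_pluecker f <-> forall t, grassmann_pluecker_in (predC1 t) (f t).
Proof.
split=> gp t p q r s; first by move=> Ds Us; apply: gp; rewrite distinct5E Ds Us.
by rewrite distinct5E => /andP[]; apply: gp.
Qed.

Hypotheses (f_cyclic : cyclic_symmetry f) (f_anti : antisymmetry f)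
  (f_nondeg : nondegeneracy f).

Lemma orient_swap x y z : distinct3 x y z -> f x z y = ~~ f x y z.
Proof.
move=> D; have := f_anti D; have := f_nondeg D.
by case: (f x y z); case: (f x z y) => // _ /(_ isT).
Qed.

Lemma orient_rot x y z : distinct3 x y z -> f y z x = f x y z.
Proof.
move=> [xy xz yz]; apply/idP/idP => [h|]; last exact: f_cyclic.
by apply: f_cyclic (f_cyclic _ h); split; rewrite // eq_sym.
Qed.

Lemma tournament_at t : {in predC1 t &, forall x y, x != y -> f t y x = ~~ f t x y}.
Proof.
by move=> x y; rewrite !inE => xt yt xy; apply: orient_swap; rewrite /distinct3 !(eq_sym t).
Qed.

Lemma orientE x y z : x != y -> x != z -> y != z ->
  (f y z x = f x y z) * (f z x y = f x y z) *
  (f x z y = ~~ f x y z) * (f z y x = ~~ f x y z) * (f y x z = ~~ f x y z).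
Proof.
move=> xy xz yz; have D : distinct3 x y z by [].
have D1 : distinct3 y z x by split; rewrite // eq_sym.
have D2 : distinct3 z x y by split; rewrite // eq_sym.
have rot2 : f z x y = f x y z by rewrite (orient_rot D2).
by do !split;
  rewrite ?(orient_swap D1) ?(orient_swap D2) ?rot2 ?(orient_rot D) ?(orient_swap D).
Qed.

Lemma dual_transitivity_of_transitivity : transitivity f -> dual_transitivity.
Proof.
move=> /transitivityE ftr t s p q r D.
have tr5 c a x y z : perm_eq [:: c; a; x; y; z] [:: t; s; p; q; r] ->
    trans_at (f c) a x y z.
  by move=> e; apply: ftr; rewrite /distinct5 (perm_uniq e).
(* If the conclusion failed, each of the four orientations of s p q and s p r
   would be refuted by chaining three of these eight instances of Axiom 5. *)
have := tr5 p q t r s ltac:(by apply/permP => x /=; lia).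
have := tr5 q s t p r ltac:(by apply/permP => x /=; lia).
have := tr5 r s t q p ltac:(by apply/permP => x /=; lia).
have := tr5 s t p q r ltac:(by apply/permP => x /=; lia).
have := tr5 r p t q s ltac:(by apply/permP => x /=; lia).
have := tr5 s t p r q ltac:(by apply/permP => x /=; lia).
have := tr5 q r t p s ltac:(by apply/permP => x /=; lia).
have := tr5 p s t r q ltac:(by apply/permP => x /=; lia).
move: D; rewrite /distinct5 /= !inE !negb_or.
move=> /and5P[/and4P[ts tp tq tr] /and3P[sp sq sr] /andP[pq pr] qr _].
rewrite /trans_at /cotrans_at ?(orientE ts tp sp) ?(orientE ts tq sq) ?(orientE ts tr sr).
rewrite ?(orientE tp tq pq) ?(orientE tp tr pr) ?(orientE tq tr qr).
rewrite ?(orientE sp sq pq) ?(orientE sp sr pr) ?(orientE sq sr qr) ?(orientE pq pr qr).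
by case: (f t s p); case: (f t s q); case: (f t s r); case: (f t p q); case: (f t p r);
  case: (f t q r); case: (f s p q); case: (f s p r); case: (f s q r); case: (f p q r).
Qed.

End Chirotope.

Theorem lemma2 (E : finType) (f : triple_fun E) :
  uniform_chirotope f <-> pre_CC_system f.
Proof.
split=> -[cyc anti nondeg ax]; split=> //.
  move/grassmann_pluecker_local: ax => gp.
  have /transitivity_local[] // : forall t, locally_transitive (predC1 t) (f t).
  by move=> t; apply/locally_transitiveP; [exact: (tournament_at anti nondeg) | exact: gp].
have /transitivity_local loc : transitivity f /\ dual_transitivity f.
  by split; last exact: dual_transitivity_of_transitivity cyc anti nondeg ax.
apply/grassmann_pluecker_local => t.
by apply/locally_transitiveP; [exact: (tournament_at anti nondeg) | exact: loc].
Qed.
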